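(* Let $p$ be an odd prime, let $h_1,h_2$ be relatively prime positive integers, both different from $1$, and set $h=h_1+h_2$. Let $\mathcal{D}:\overline{\mathfrak m}^2\to\overline{\mathfrak m}^2$ be given by $\mathcal{D}(x_1,x_2)=(px_1+x_2^{p^{h_1}},\ px_2+x_1^{p^{h_2}})$. Let $n\ge1$ and let $(\xi,\eta)$ be a non-trivial $p^n$-torsion point of $\mathcal D$, i.e. $\mathcal{D}^{\circ n}(\xi,\eta)=(0,0)$ but $\mathcal{D}^{\circ(n-1)}(\xi,\eta)\ne(0,0)$. Then: if $n=2m$ is even, $v(\xi)=\dfrac{p^{h_2}+1}{p^{hm-h_1}(p^h-1)}$ and $v(\eta)=\dfrac{p^{h_1}+1}{p^{hm-h_2}(p^h-1)}$; if $n=2m+1$ is odd, $v(\xi)=\dfrac{p^{h_1}+1}{p^{hm}(p^h-1)}$ and $v(\eta)=\dfrac{p^{h_2}+1}{p^{hm}(p^h-1)}$.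
   Context: $v$ denotes the $p$-adic valuation on $\overline{\mathbb{Q}}_p$ normalized by $v(p)=1$, and $\overline{\mathfrak m}$ the maximal ideal of the ring of integers of $\overline{\mathbb{Q}}_p$; $\mathcal D^{\circ k}$ is the $k$-fold iterate ($\mathcal{D}^{\circ 0}=\mathrm{Id}$). The map $\mathcal D$ is a simple approximation of the multiplication-by-$p$ endomorphism of the 2-dimensional Lubin–Tate formal group associated with $(h_1,h_2)$. *)

From mathcomp Require Import all_boot all_order all_algebra.
Set Implicit Arguments. Unset Strict Implicit. Unset Printing Implicit Defensive.
Import Order.TTheory GRing.Theory Num.Theory.
Local Open Scope ring_scope.

(* A (rank-one, rational-valued) non-archimedean valuation v on a field K,
   normalized by v(p) = 1.  v is only meaningful on nonzero elements
   (v 0 plays the role of +oo and its value is irrelevant). *)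
Definition is_pvaluation (K : fieldType) (p : nat) (v : K -> rat) : Prop :=
  [/\ forall x y : K, x != 0 -> y != 0 -> v (x * y) = v x + v y,
      forall x y : K, x != 0 -> y != 0 -> x + y != 0 ->
        Num.min (v x) (v y) <= v (x + y)
    & v (p%:R) = 1 ].

Definition in_mbar (K : fieldType) (v : K -> rat) (x : K) : Prop :=
  x = 0 \/ 0 < v x.

Definition Dmap (K : fieldType) (p h1 h2 : nat) (z : K * K) : K * K :=
  (p%:R * z.1 + z.2 ^+ (p ^ h1), p%:R * z.2 + z.1 ^+ (p ^ h2)).

(* Let q1 = p^h1, q2 = p^h2 and let (a, b) = D^(n-1)(xi, eta) be the last nonzero
   iterate.  Then D(a, b) = 0, i.e. p a = -b^q1 and p b = -a^q2, so both coordinates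
   are nonzero and 1 + v a = q1 v b, 1 + v b = q2 v a, which determines v a, v b < 1.
   Going backwards, if D(x, y) = (a, b) with v a, v b < 1, then v (p x) >= 1 > v a,
   so the ultrametric inequality forces v (y^q1) = v a, i.e. v y = v a / q1, and
   likewise v x = v b / q2: at each step back the two valuations are swapped and
   divided, and n - 1 such steps give the closed forms. *)

From mathcomp Require Import all_boot all_order all_algebra.
From mathcomp Require Import ring lra zify.
Set Implicit Arguments. Unset Strict Implicit.
Import Order.TTheory GRing.Theory Num.Theory.
Local Open Scope ring_scope.

Section PValuation.

Variables (K : fieldType) (p : nat) (v : K -> rat).
Hypothesis hv : is_pvaluation p v.

Lemma pvaluationM (x y : K) : x != 0 -> y != 0 -> v (x * y) = v x + v y.
Proof. by case: hv => vM _ _; apply: vM. Qed.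

Lemma pvaluation1 : v 1 = 0.
Proof. by have := pvaluationM (oner_neq0 K) (oner_neq0 K); rewrite mulr1; lra. Qed.

Lemma pvaluationN (x : K) : x != 0 -> v (- x) = v x.
Proof.
move=> x0; have N10 : (-1 : K) != 0 by rewrite oppr_eq0 oner_neq0.
have := pvaluationM N10 N10; rewrite mulrNN mulr1 pvaluation1 => vN1.
by rewrite -mulN1r pvaluationM //; lra.
Qed.

Lemma pvaluationX (x : K) (k : nat) : x != 0 -> v (x ^+ k) = k%:R * v x.
Proof.
move=> x0; elim: k => [|k IH]; first by rewrite expr0 pvaluation1 mul0r.
by rewrite exprS pvaluationM ?expf_neq0 // IH -natr1; ring.
Qed.

Lemma pvaluationD_lt (x y : K) : x != 0 -> y != 0 -> v x < v y ->
  x + y != 0 /\ v (x + y) = v x.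
Proof.
move=> x0 y0 lt_xy; case: hv => _ vD _.
have xy0 : x + y != 0.
  by apply: contraTneq lt_xy => /addr0_eq <-; rewrite pvaluationN // ltxx.
split=> //; have := vD _ _ x0 y0 xy0; rewrite ge_min => ge_xy.
have Ny0 : - y != 0 by rewrite oppr_eq0.
have := vD _ _ xy0 Ny0; rewrite addrK pvaluationN // ge_min => /(_ x0) ge_x.
by case/orP: ge_xy; case/orP: ge_x; lra.
Qed.

Lemma pvaluation_natmul (x : K) : p%:R != 0 :> K -> x != 0 -> v (p%:R * x) = 1 + v x.
Proof. by case: hv => _ _ vp p0 x0; rewrite pvaluationM // vp. Qed.

Lemma in_mbar_gt0 (x : K) : x != 0 -> in_mbar v x -> 0 < v x.
Proof. by move=> x0 [x_eq0|//]; rewrite x_eq0 eqxx in x0. Qed.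

Lemma in_mbarD (x y : K) : in_mbar v x -> in_mbar v y -> in_mbar v (x + y).
Proof.
have [->|x0] := eqVneq x 0; first by rewrite add0r.
have [->|y0] := eqVneq y 0; first by rewrite addr0.
have [->|xy0] := eqVneq (x + y) 0; first by left.
move=> /(in_mbar_gt0 x0) vx /(in_mbar_gt0 y0) vy; right.
case: hv => _ vD _; have := vD _ _ x0 y0 xy0; rewrite ge_min.
by case/orP; lra.
Qed.

Lemma in_mbarM (x y : K) : in_mbar v x -> in_mbar v y -> in_mbar v (x * y).
Proof.
have [->|x0] := eqVneq x 0; first by rewrite mul0r; left.
have [->|y0] := eqVneq y 0; first by rewrite mulr0; left.
move=> /(in_mbar_gt0 x0) vx /(in_mbar_gt0 y0) vy; right.
by rewrite pvaluationM //; lra.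
Qed.

Lemma in_mbarX (x : K) (k : nat) : (0 < k)%N -> in_mbar v x -> in_mbar v (x ^+ k).
Proof.
case: k => // k _ mx; elim: k => [|k IH]; first by rewrite expr1.
by rewrite exprS; apply: in_mbarM.
Qed.

Lemma in_mbar_natp : in_mbar v p%:R.
Proof. by case: hv => _ _ vp; right; rewrite vp. Qed.

Lemma pvaluation_summandX (s u w : K) (k : nat) : p%:R != 0 :> K -> (0 < k)%N ->
  s = p%:R * u + w ^+ k -> s != 0 -> v s < 1 -> in_mbar v u ->
  w != 0 /\ v w = v s / k%:R.
Proof.
move=> p0 k0 es s0 vs1 mu.
have [wk0 vwk] : w ^+ k != 0 /\ v (w ^+ k) = v s.
  have [u0|u0] := eqVneq u 0; first by move: es; rewrite u0 mulr0 add0r => <-.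
  have pu0 : p%:R * u != 0 by rewrite mulf_neq0.
  have -> : w ^+ k = s + - (p%:R * u) by rewrite es addrAC subrr add0r.
  apply: pvaluationD_lt; rewrite ?oppr_eq0 // pvaluationN // pvaluation_natmul //.
  by have := in_mbar_gt0 u0 mu; lra.
have w0 : w != 0 by move: wk0; rewrite expf_eq0 k0.
by split=> //; rewrite -vwk pvaluationX // mulrAC divff ?mul1r // pnatr_eq0 -lt0n.
Qed.

Lemma pvaluation_natmul_addX_eq0 (x y : K) (k : nat) : p%:R != 0 :> K -> (0 < k)%N ->
  p%:R * x + y ^+ k = 0 -> x != 0 -> y != 0 /\ 1 + v x = k%:R * v y.
Proof.
move=> p0 k0 /addr0_eq e x0; have px0 : p%:R * x != 0 by rewrite mulf_neq0.
have yk0 : y ^+ k != 0 by rewrite -e oppr_eq0.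
have y0 : y != 0 by move: yk0; rewrite expf_eq0 k0.
by split=> //; rewrite -pvaluation_natmul // -pvaluationX // -e pvaluationN.
Qed.

End PValuation.

Definition in_mbar2 (K : fieldType) (v : K -> rat) (z : K * K) : Prop :=
  in_mbar v z.1 /\ in_mbar v z.2.

Definition valuation2 (K : fieldType) (v : K -> rat) (z : K * K) : rat * rat :=
  (v z.1, v z.2).

Definition swap_div (q1 q2 : rat) (c : rat * rat) : rat * rat := (c.2 / q2, c.1 / q1).

Definition kernel_valuation (q1 q2 : rat) : rat * rat :=
  ((q1 + 1) / (q1 * q2 - 1), (q2 + 1) / (q1 * q2 - 1)).

Lemma swap_div_lt1 (q1 q2 : rat) (c : rat * rat) : 1 <= q1 -> 1 <= q2 ->
  c.1 < 1 -> c.2 < 1 -> (swap_div q1 q2 c).1 < 1 /\ (swap_div q1 q2 c).2 < 1.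
Proof.
by move=> q1_ge1 q2_ge1 c1 c2; split; rewrite /= ltr_pdivrMr ?mul1r; lra.
Qed.

Lemma iter_swap_div_lt1 (q1 q2 : rat) (c : rat * rat) (k : nat) : 1 <= q1 -> 1 <= q2 ->
  c.1 < 1 -> c.2 < 1 ->
  (iter k (swap_div q1 q2) c).1 < 1 /\ (iter k (swap_div q1 q2) c).2 < 1.
Proof. by move=> q1_ge1 q2_ge1 c1 c2; elim: k => //= k []; apply: swap_div_lt1. Qed.

Lemma iter_swap_div_even (q1 q2 : rat) (c : rat * rat) (m : nat) : q1 != 0 -> q2 != 0 ->
  iter (2 * m) (swap_div q1 q2) c = (c.1 / (q1 * q2) ^+ m, c.2 / (q1 * q2) ^+ m).
Proof.
move=> q1_0 q2_0; elim: m => [|m IH]; first by rewrite !expr0 !divr1; case: c.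
rewrite mulnS !iterS IH /swap_div /= exprS.
by congr (_, _); field; rewrite ?expf_neq0 ?mulf_neq0 ?q1_0 ?q2_0.
Qed.

Lemma iter_swap_div_odd (q1 q2 : rat) (c : rat * rat) (m : nat) : q1 != 0 -> q2 != 0 ->
  iter (2 * m).+1 (swap_div q1 q2) c =
    (c.2 / (q2 * (q1 * q2) ^+ m), c.1 / (q1 * (q1 * q2) ^+ m)).
Proof.
move=> q1_0 q2_0; rewrite iterS iter_swap_div_even // /swap_div /=.
by congr (_, _); field; rewrite ?expf_neq0 ?mulf_neq0 ?q1_0 ?q2_0.
Qed.

Lemma kernel_valuation_unique (q1 q2 a b : rat) : q1 * q2 != 1 ->
  1 + a = q1 * b -> 1 + b = q2 * a -> (a, b) = kernel_valuation q1 q2.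
Proof.
move=> q12 ea eb; have Q0 : q1 * q2 - 1 != 0 by rewrite subr_eq0.
congr (_, _); apply: (mulIf Q0); rewrite divfK //.
  rewrite (_ : a * _ = q1 * (q2 * a) - a); last by ring.
  by rewrite -eb mulrDr mulr1 -ea; ring.
rewrite (_ : b * _ = q2 * (q1 * b) - b); last by ring.
by rewrite -ea mulrDr mulr1 -eb; ring.
Qed.

Lemma kernel_valuation_lt1 (q1 q2 : rat) : 3 <= q1 -> 3 <= q2 ->
  (kernel_valuation q1 q2).1 < 1 /\ (kernel_valuation q1 q2).2 < 1.
Proof.
by move=> q1_ge3 q2_ge3; split; rewrite /= ltr_pdivrMr ?mul1r; nra.
Qed.

Section KernelValuationOrbit.

Variables (p h1 h2 : nat).
Hypotheses (p_gt1 : (1 < p)%N) (h1_gt0 : (0 < h1)%N).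

Local Notation q1 := ((p ^ h1)%:R : rat).
Local Notation q2 := ((p ^ h2)%:R : rat).
Local Notation h := (h1 + h2)%N.

Let expn_p_gt0 k : (0 < p ^ k)%N.
Proof. by rewrite expn_gt0 (ltnW p_gt1). Qed.

Let q_neq0 k : (p ^ k)%:R != 0 :> rat.
Proof. by rewrite pnatr_eq0 -lt0n. Qed.

Let natr_expnM k : (p ^ (h * k))%:R = (q1 * q2) ^+ k :> rat.
Proof. by rewrite expnM natrX expnD natrM. Qed.

Let natr_pred_expn : ((p ^ h).-1)%:R = q1 * q2 - 1 :> rat.
Proof. by rewrite -subn1 natrB // expnD natrM. Qed.

Let kernel_denom_neq0 : q1 * q2 - 1 != 0.
Proof.
rewrite -natr_pred_expn pnatr_eq0 -lt0n -subn1 subn_gt0.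
by rewrite -[1%N](expn0 p) ltn_exp2l // addn_gt0 h1_gt0.
Qed.

Lemma iter_swap_div_kernel_even (m : nat) :
  iter (2 * m) (swap_div q1 q2) (kernel_valuation q1 q2) =
    (((p ^ h1).+1)%:R / ((p ^ (h * m) * (p ^ h).-1)%N)%:R,
     ((p ^ h2).+1)%:R / ((p ^ (h * m) * (p ^ h).-1)%N)%:R).
Proof.
rewrite iter_swap_div_even // !natrM natr_expnM natr_pred_expn -!natr1 /=.
by congr (_, _); field; rewrite ?expf_neq0 ?mulf_neq0 ?q_neq0 ?kernel_denom_neq0.
Qed.

Lemma iter_swap_div_kernel_odd (m : nat) :
  iter (2 * m).+1 (swap_div q1 q2) (kernel_valuation q1 q2) =
    (((p ^ h2).+1)%:R / ((p ^ (h2 + h * m) * (p ^ h).-1)%N)%:R,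
     ((p ^ h1).+1)%:R / ((p ^ (h1 + h * m) * (p ^ h).-1)%N)%:R).
Proof.
rewrite iter_swap_div_odd // !natrM natr_pred_expn !expnD !natrM natr_expnM -!natr1 /=.
by congr (_, _); field; rewrite ?expf_neq0 ?mulf_neq0 ?q_neq0 ?kernel_denom_neq0.
Qed.

End KernelValuationOrbit.

Section Dmap.

Variables (K : fieldType) (p h1 h2 : nat) (v : K -> rat).
Hypotheses (hv : is_pvaluation p v) (pK : p%:R != 0 :> K).

Local Notation D := (Dmap p h1 h2).
Local Notation q1 := ((p ^ h1)%:R : rat).
Local Notation q2 := ((p ^ h2)%:R : rat).

Let p_gt0 : (0 < p)%N.
Proof. by case: (posnP p) pK => // ->; rewrite eqxx. Qed.

Let expn_p_gt0 k : (0 < p ^ k)%N.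
Proof. by rewrite expn_gt0 p_gt0. Qed.

Lemma in_mbar2_Dmap (z : K * K) : in_mbar2 v z -> in_mbar2 v (D z).
Proof.
have mX x k : in_mbar v x -> in_mbar v (x ^+ (p ^ k)) by apply: (in_mbarX hv).
have mp := in_mbarM hv (in_mbar_natp hv).
by case=> mz1 mz2; split; apply: (in_mbarD hv); [apply: mp | apply: mX | apply: mp | apply: mX].
Qed.

Lemma Dmap_preimage_valuation (z : K * K) : in_mbar2 v z ->
  (D z).1 != 0 -> (D z).2 != 0 -> v (D z).1 < 1 -> v (D z).2 < 1 ->
  [/\ z.1 != 0, z.2 != 0 & valuation2 v z = swap_div q1 q2 (valuation2 v (D z))].
Proof.
case: z => x y [/= mx my] a0 b0 va vb.
have [y0 vy] := pvaluation_summandX hv pK (expn_p_gt0 h1) erefl a0 va mx.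
have [x0 vx] := pvaluation_summandX hv pK (expn_p_gt0 h2) erefl b0 vb my.
by split=> //; rewrite /valuation2 /swap_div /= vx vy.
Qed.

Lemma iter_Dmap_preimage_valuation (z : K * K) (k : nat) : in_mbar2 v z ->
  let w := iter k D z in w.1 != 0 -> w.2 != 0 -> v w.1 < 1 -> v w.2 < 1 ->
  [/\ z.1 != 0, z.2 != 0 & valuation2 v z = iter k (swap_div q1 q2) (valuation2 v w)].
Proof.
have q_ge1 h : 1 <= (p ^ h)%:R :> rat by rewrite ler1n.
elim: k z => [|k IH] z mz; first by [].
rewrite iterSr => w w1 w2 vw1 vw2.
have [Dz1 Dz2 vDz] := IH (D z) (in_mbar2_Dmap mz) w1 w2 vw1 vw2.
have [] := @iter_swap_div_lt1 _ _ (valuation2 v w) k (q_ge1 h1) (q_ge1 h2) vw1 vw2.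
rewrite -vDz => vDz1 vDz2.
by have [z1 z2 ->] := Dmap_preimage_valuation mz Dz1 Dz2 vDz1 vDz2; rewrite vDz.
Qed.

Lemma Dmap_kernel_valuation (z : K * K) : (1 < p)%N -> (0 < h1)%N ->
  D z = (0, 0) -> z != (0, 0) ->
  [/\ z.1 != 0, z.2 != 0 & valuation2 v z = kernel_valuation q1 q2].
Proof.
case: z => a b p_gt1 h1_gt0 [e1 e2] z0.
have [a0 b0] : a != 0 /\ b != 0.
  move: z0; rewrite xpair_eqE negb_and => /orP[a0|b0].
    by have [] := pvaluation_natmul_addX_eq0 hv pK (expn_p_gt0 h1) e1 a0.
  by have [] := pvaluation_natmul_addX_eq0 hv pK (expn_p_gt0 h2) e2 b0.
have [_ ea] := pvaluation_natmul_addX_eq0 hv pK (expn_p_gt0 h1) e1 a0.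
have [_ eb] := pvaluation_natmul_addX_eq0 hv pK (expn_p_gt0 h2) e2 b0.
split=> //; apply: kernel_valuation_unique ea eb.
rewrite -natrM -expnD pnatr_eq1 -(expn0 p) eqn_exp2l //.
by rewrite gtn_eqF ?addn_gt0 ?h1_gt0.
Qed.

Lemma torsion_point_valuation (z : K * K) (n : nat) :
  (1 < p)%N -> (1 < h1)%N -> (1 < h2)%N -> (0 < n)%N -> in_mbar2 v z ->
  iter n D z = (0, 0) -> iter n.-1 D z != (0, 0) ->
  [/\ z.1 != 0, z.2 != 0 &
      valuation2 v z = iter n.-1 (swap_div q1 q2) (kernel_valuation q1 q2)].
Proof.
move=> p_gt1 h1_gt1 h2_gt1 n_gt0 mz Dnz Dn1z.
have q_ge3 k : (1 < k)%N -> 3 <= (p ^ k)%:R :> rat.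
  move=> k_gt1; rewrite ler_nat (leq_trans _ (leq_pexp2l p_gt0 k_gt1)) //.
  by rewrite expnS expn1; nia.
have Dw0 : D (iter n.-1 D z) = (0, 0) by rewrite -iterS prednK.
have [w1 w2 vw] := Dmap_kernel_valuation p_gt1 (ltnW h1_gt1) Dw0 Dn1z.
have [] := kernel_valuation_lt1 (q_ge3 _ h1_gt1) (q_ge3 _ h2_gt1).
rewrite -vw => vw1 vw2.
by have [z1 z2] := iter_Dmap_preimage_valuation mz w1 w2 vw1 vw2; rewrite vw.
Qed.

End Dmap.

Theorem theorem5p5
  (K : closedFieldType) (p h1 h2 : nat) (v : K -> rat)
  (charK0 : [pchar K] =i pred0)
  (hv : is_pvaluation p v)
  (hp : prime p) (hpodd : odd p)
  (hh1 : (1 < h1)%N) (hh2 : (1 < h2)%N) (hcop : coprime h1 h2)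
  (n : nat) (hn : (1 <= n)%N) (xi eta : K)
  (hxi : in_mbar v xi) (heta : in_mbar v eta)
  (htors : iter n (Dmap p h1 h2) (xi, eta) = (0, 0))
  (hnontriv : iter n.-1 (Dmap p h1 h2) (xi, eta) != (0, 0)) :
  let h := (h1 + h2)%N in
  xi != 0 /\ eta != 0 /\
  (forall m : nat, n = (2 * m)%N ->
     v xi = ((p ^ h2).+1)%:R / ((p ^ (h * m - h1) * (p ^ h).-1)%N)%:R
  /\ v eta = ((p ^ h1).+1)%:R / ((p ^ (h * m - h2) * (p ^ h).-1)%N)%:R) /\
  (forall m : nat, n = (2 * m).+1 ->
     v xi = ((p ^ h1).+1)%:R / ((p ^ (h * m) * (p ^ h).-1)%N)%:R
  /\ v eta = ((p ^ h2).+1)%:R / ((p ^ (h * m) * (p ^ h).-1)%N)%:R).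
Proof.
move=> h; have p_gt1 := prime_gt1 hp; have h1_gt0 := ltnW hh1.
have pK : p%:R != 0 :> K by move/pcharf0P: charK0 => ->; rewrite -lt0n (ltnW p_gt1).
have mz : in_mbar2 v (xi, eta) by [].
have [xi0 eta0 vxe] := torsion_point_valuation hv pK p_gt1 hh1 hh2 hn mz htors hnontriv.
split=> //; split=> //; split=> m hm; move: vxe; rewrite hm.
  case: m hm => [|m] hm; first by rewrite hm in hn.
  have -> : (h * m.+1 - h1 = h2 + h * m)%N by rewrite mulnS /h; lia.
  have -> : (h * m.+1 - h2 = h1 + h * m)%N by rewrite mulnS /h; lia.
  by rewrite mulnS add2n succnK iter_swap_div_kernel_odd // => -[-> ->].
by rewrite succnK iter_swap_div_kernel_even // => -[-> ->].
Qed.
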